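(* Let $G$ be a finite, simple, connected graph and let $v$ be a cut vertex of $G$. Then every resolving set for $G$ is disjoint from the vertex set of at most one connected component of $G\setminus\{v\}$. Moreover, if $W$ is a resolving set for $G$ that intersects the vertex sets of at least two distinct components of $G\setminus\{v\}$, then $W\setminus\{v\}$ is also a resolving set for $G$.
   Context: For vertices $x,y$ of a connected graph $G$, $d(x,y)$ denotes the length of a shortest $x$–$y$ path. A set $W\subseteq V(G)$ is a resolving set for $G$ if for every two distinct vertices $u,v\in V(G)$ there exists $w\in W$ with $d(u,w)\neq d(v,w)$. A vertex $v$ is a cut vertex of $G$ if the induced subgraph $G\setminus\{v\}$ on $V(G)\setminus\{v\}$ has at least two connected components. *)

(* A finite simple graph is a symmetric irreflexive
   relation e on a finType T. *)
From mathcomp Require Import all_boot.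
Set Implicit Arguments. Unset Strict Implicit. Unset Printing Implicit Defensive.

Section Graphs.
Variable T : finType.
Variable e : rel T.

Definition connected_graph : Prop := forall x y : T, connect e x y.

Fixpoint nball (n : nat) (x : T) : {set T} :=
  match n with
  | 0 => [set x]
  | n'.+1 => nball n' x :|: [set y | [exists z in nball n' x, e z y]]
  end.

(* d(x,y) = least n with y in nball n x, i.e. length of a shortest x-y path.
   (Searched in 0..#|T|-1, which suffices for connected graphs; value #|T|
    if y is unreachable.) *)
Definition dist (x y : T) : nat :=
  find (fun n => y \in nball n x) (iota 0 #|T|).

Definition resolving (W : {set T}) : Prop :=
  forall u w : T, u != w -> exists2 z, z \in W & dist u z != dist w z.

Definition del_rel (v : T) : rel T :=
  [rel x y | [&& x != v, y != v & e x y]].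

Definition comp_of (v x : T) : {set T} :=
  [set y | (y != v) && connect (del_rel v) x y].

Definition components_del (v : T) : {set {set T}} :=
  [set comp_of v x | x in [set~ v]].

Definition cut_vertex (v : T) : Prop :=
  1 < #|components_del v|.
End Graphs.

From mathcomp Require Import all_boot.
Set Implicit Arguments. Unset Strict Implicit. Unset Printing Implicit Defensive.

(* Every walk from a component C of G \ {v} to a vertex outside C passes
   through v, so d(x, y) = d(x, v) + d(v, y) for x in C and y outside C.
   Hence two neighbours of v in distinct components are both at distance
   1 + d(v, z) from every z outside these components: a resolving set misses
   at most one component.  Now let a \in W :&: C1 and b \in W :&: C2.  For x
   outside C1, d(x, a) = d(x, v) + d(v, a) while d(y, a) <= d(y, v) + d(v, a),
   so d(x, a) = d(y, a) forces d(x, v) <= d(y, v); since every vertex misses C1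
   or C2, vertices that a and b do not resolve are not resolved by v either. *)

Section Balls.
Variables (T : finType) (e : rel T).

Lemma nballS n x y :
  (y \in nball e n.+1 x) = (y \in nball e n x) || [exists z in nball e n x, e z y].
Proof. by rewrite /= in_setU inE. Qed.

Lemma nball_le m n x y : m <= n -> y \in nball e m x -> y \in nball e n x.
Proof.
elim: n => [|n IHn]; first by rewrite leqn0 => /eqP ->.
rewrite leq_eqVlt => /orP [/eqP -> // | lt_mn] /(IHn lt_mn) y_n.
by rewrite nballS y_n.
Qed.

Lemma nball_trans m n x y z :
  y \in nball e m x -> z \in nball e n y -> z \in nball e (m + n) x.
Proof.
move=> y_m; elim: n z => [|n IHn] z.
  by rewrite /= in_set1 addn0 => /eqP ->.
rewrite addnS !nballS => /orP [/IHn -> // | /existsP [t /andP [t_n e_tz]]].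
by apply/orP; right; apply/existsP; exists t; rewrite IHn.
Qed.

Lemma nball_edge x y : e x y -> y \in nball e 1 x.
Proof.
by move=> e_xy; rewrite nballS; apply/orP; right; apply/existsP; exists x; rewrite /= in_set1 eqxx.
Qed.

Lemma path_nball x p : path e x p -> last x p \in nball e (size p) x.
Proof.
elim: p x => [|y p IHp] x /=; first by rewrite in_set1.
by case/andP => /nball_edge y_1 /IHp; apply: nball_trans y_1.
Qed.

Lemma nball_sym : symmetric e -> forall n x y, y \in nball e n x -> x \in nball e n y.
Proof.
move=> e_sym; elim=> [|n IHn] x y; first by rewrite /= !in_set1 eq_sym.
rewrite nballS => /orP [/IHn x_n | /existsP [z /andP [z_n e_zy]]].
  by apply: nball_le x_n.
by rewrite -add1n; apply: nball_trans (IHn _ _ z_n); apply: nball_edge; rewrite e_sym.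
Qed.

End Balls.

Section Distance.
Variables (T : finType) (e : rel T).
Hypothesis e_conn : connected_graph e.

Lemma has_nball x y : has (fun n => y \in nball e n x) (iota 0 #|T|).
Proof.
have /connectP [p /shortenP [q q_path q_uniq _] ->] := e_conn x y.
apply/hasP; exists (size q); last exact: path_nball.
by rewrite mem_iota add0n; have := max_card [pred z in x :: q]; rewrite (card_uniqP q_uniq).
Qed.

Lemma dist_lt x y : dist e x y < #|T|.
Proof. by have := has_nball x y; rewrite has_find size_iota. Qed.

Lemma dist_nball x y : y \in nball e (dist e x y) x.
Proof. by have := nth_find 0 (has_nball x y); rewrite nth_iota ?add0n ?dist_lt. Qed.

Lemma dist_min n x y : y \in nball e n x -> dist e x y <= n.
Proof.
move=> y_n; rewrite leqNgt; apply/negP => lt_n.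
have := before_find 0 lt_n; rewrite nth_iota ?add0n ?y_n //.
exact: ltn_trans lt_n (dist_lt x y).
Qed.

Lemma dist_triangle x y z : dist e x z <= dist e x y + dist e y z.
Proof. by apply: dist_min; apply: nball_trans (dist_nball x y) (dist_nball y z). Qed.

Lemma dist_sym : symmetric e -> forall x y, dist e x y = dist e y x.
Proof.
by move=> e_sym x y; apply/eqP; rewrite eqn_leq !dist_min // nball_sym // dist_nball.
Qed.

Lemma dist_edge : irreflexive e -> forall x y, e x y -> dist e x y = 1.
Proof.
move=> e_irr x y e_xy; apply/eqP; rewrite eqn_leq dist_min ?nball_edge //= lt0n.
apply: contraTneq e_xy => d0; have := dist_nball x y.
by rewrite d0 /= in_set1 => /eqP <-; rewrite e_irr.
Qed.

End Distance.

Section CutVertex.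
Variables (T : finType) (e : rel T) (v : T).
Hypotheses (e_sym : symmetric e) (e_irr : irreflexive e) (e_conn : connected_graph e).

Lemma componentP C :
  C \in components_del e v -> exists2 x, x != v & C = comp_of e v x.
Proof. by case/imsetP => x; rewrite !inE => x_v ->; exists x. Qed.

Lemma comp_of_edge x y z :
  y \in comp_of e v x -> z != v -> e y z -> z \in comp_of e v x.
Proof.
rewrite !inE => /andP [y_v xy] z_v e_yz; rewrite z_v.
by apply: connect_trans xy (connect1 _); rewrite /del_rel /= y_v z_v.
Qed.

Lemma comp_of_mem x y : y \in comp_of e v x -> comp_of e v y = comp_of e v x.
Proof.
have del_sym : connect_sym (del_rel e v).
  by apply: sym_connect_sym => a b; rewrite /del_rel /= e_sym andbCA.
rewrite inE => /andP [_ xy]; apply/setP => z; rewrite !inE.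
by rewrite (same_connect del_sym xy).
Qed.

Lemma cut_notin_component C : C \in components_del e v -> v \notin C.
Proof. by case/componentP => x _ ->; rewrite inE eqxx. Qed.

Lemma components_disjoint C1 C2 x :
  C1 \in components_del e v -> C2 \in components_del e v -> C1 != C2 ->
  x \in C1 -> x \notin C2.
Proof.
move=> /componentP [x1 _ ->] /componentP [x2 _ ->] + x1x.
by apply: contraNN => x2x; rewrite -(comp_of_mem x1x) (comp_of_mem x2x).
Qed.

Lemma component_adj_cut C :
  C \in components_del e v -> exists2 y, y \in C & e y v.
Proof.
case/componentP => x0 x0_v ->.
have : x0 \in comp_of e v x0 by rewrite inE x0_v connect0.
have /connectP [p] := e_conn x0 v; move: {1 2 3}x0 => x.
elim: p x => [|y p IHp] x /=; first by move=> _ -> ; rewrite inE eqxx.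
case/andP => e_xy y_p last_v x_C; have [yv | y_v] := eqVneq y v.
  by exists x; last rewrite -yv.
exact: IHp y_p last_v (comp_of_edge x_C y_v e_xy).
Qed.

Lemma nball_through_cut C n x y :
  C \in components_del e v -> x \in C -> y \notin C -> y \in nball e n x ->
  exists k, [/\ k <= n, v \in nball e k x & y \in nball e (n - k) v].
Proof.
case/componentP => x0 _ -> x_C; elim: n y => [|n IHn] y y_C.
  by rewrite /= in_set1 => /eqP yx; rewrite yx x_C in y_C.
rewrite nballS => /orP [/(IHn _ y_C) [k [le_kn v_k y_k]] | /existsP [z /andP [z_n e_zy]]].
  by exists k; split; rewrite ?leqW //; apply: nball_le y_k; apply: leq_sub2r.
have [z_C | z_C] := boolP (z \in comp_of e v x0).
  have [yv | y_v] := eqVneq y v; last by rewrite (comp_of_edge z_C y_v e_zy) in y_C.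
  exists n.+1; split; rewrite ?subnn /= ?in_set1 ?yv //.
  by rewrite -yv nballS; apply/orP; right; apply/existsP; exists z; rewrite z_n.
have [k [le_kn v_k z_k]] := IHn _ z_C z_n; exists k; split; rewrite ?leqW //.
by rewrite subSn // -addn1; apply: nball_trans z_k (nball_edge e_zy).
Qed.

Lemma dist_through_cut C x y :
  C \in components_del e v -> x \in C -> y \notin C ->
  dist e x y = dist e x v + dist e v y.
Proof.
move=> C_comp x_C y_C; apply/eqP; rewrite eqn_leq dist_triangle //=.
have [k [le_kn v_k y_k]] := nball_through_cut C_comp x_C y_C (dist_nball e_conn x y).
by rewrite -(subnKC le_kn) leq_add // dist_min.
Qed.

Lemma dist_cut_neighbour C y z :
  C \in components_del e v -> y \in C -> e y v -> z \notin C ->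
  dist e y z = (dist e v z).+1.
Proof. by move=> C_comp y_C e_yv z_C; rewrite (dist_through_cut C_comp y_C z_C) dist_edge. Qed.

Lemma dist_cut_le C a u w :
  C \in components_del e v -> a \in C -> w \notin C ->
  dist e u a = dist e w a -> dist e w v <= dist e u v.
Proof.
move=> C_comp a_C w_C eq_a; rewrite -(leq_add2r (dist e v a)).
have -> : dist e w v + dist e v a = dist e u a.
  rewrite eq_a (dist_sym e_conn e_sym w a) (dist_through_cut C_comp a_C w_C).
  by rewrite addnC (dist_sym e_conn e_sym v w) (dist_sym e_conn e_sym v a).
exact: dist_triangle.
Qed.

Lemma dist_cut_eq C1 C2 a b u w :
  C1 \in components_del e v -> C2 \in components_del e v -> C1 != C2 ->
  a \in C1 -> b \in C2 -> dist e u a = dist e w a -> dist e u b = dist e w b ->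
  dist e u v = dist e w v.
Proof.
move=> C1_comp C2_comp C12 a_C1 b_C2 eq_a eq_b.
have le_out x y : dist e x a = dist e y a -> dist e x b = dist e y b ->
    dist e y v <= dist e x v.
  move=> eqa eqb; have [y_C1 | y_C1] := boolP (y \in C1).
    exact: dist_cut_le C2_comp b_C2 (components_disjoint C1_comp C2_comp C12 y_C1) eqb.
  exact: dist_cut_le C1_comp a_C1 y_C1 eqa.
by apply/eqP; rewrite eqn_leq !le_out.
Qed.

Lemma resolving_disjoint_components W C1 C2 :
  resolving e W -> C1 \in components_del e v -> C2 \in components_del e v ->
  [disjoint W & C1] -> [disjoint W & C2] -> C1 = C2.
Proof.
move=> W_res C1_comp C2_comp W_C1 W_C2; apply/eqP/negP => /negP C12.
have [y1 y1_C1 e_y1v] := component_adj_cut C1_comp.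
have [y2 y2_C2 e_y2v] := component_adj_cut C2_comp.
have y12 : y1 != y2.
  by apply: contraTneq y1_C1 => ->; rewrite (components_disjoint C2_comp C1_comp) // eq_sym.
have [z z_W] := W_res y1 y2 y12; apply/negP; rewrite negbK.
rewrite (dist_cut_neighbour C1_comp y1_C1 e_y1v (negbT (disjointFr W_C1 z_W))).
by rewrite (dist_cut_neighbour C2_comp y2_C2 e_y2v (negbT (disjointFr W_C2 z_W))).
Qed.

Lemma resolving_setD1_cut W C1 C2 :
  resolving e W -> C1 \in components_del e v -> C2 \in components_del e v ->
  C1 != C2 -> W :&: C1 != set0 -> W :&: C2 != set0 -> resolving e (W :\ v).
Proof.
move=> W_res C1_comp C2_comp C12 /set0Pn [a] /setIP [a_W a_C1].
case/set0Pn=> b /setIP [b_W b_C2] u w uw.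
have in_Wv x : x \in W -> x \in C1 :|: C2 -> x \in W :\ v.
  move=> x_W; rewrite !inE x_W andbT.
  by case/orP; apply: contraTneq => ->; rewrite cut_notin_component.
have [z z_W neq_z] := W_res u w uw; have [zv | z_v] := eqVneq z v; last first.
  by exists z; rewrite // !inE z_v.
have [eq_a | neq_a] := eqVneq (dist e u a) (dist e w a); last first.
  by exists a => //; apply: in_Wv; rewrite // inE a_C1.
have [eq_b | neq_b] := eqVneq (dist e u b) (dist e w b); last first.
  by exists b => //; apply: in_Wv; rewrite // inE b_C2 orbT.
by rewrite zv (dist_cut_eq C1_comp C2_comp C12 a_C1 b_C2 eq_a eq_b) eqxx in neq_z.
Qed.

End CutVertex.

Theorem proposition2p2 (T : finType) (e : rel T)
  (e_sym : symmetric e) (e_irr : irreflexive e)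
  (e_conn : connected_graph e) (v : T) (hv : cut_vertex e v) :
  (forall W : {set T}, resolving e W ->
     forall C1 C2, C1 \in components_del e v -> C2 \in components_del e v ->
       [disjoint W & C1] -> [disjoint W & C2] -> C1 = C2)
  /\
  (forall W : {set T}, resolving e W ->
     (exists C1 C2, [/\ C1 \in components_del e v, C2 \in components_del e v,
                        C1 != C2, W :&: C1 != set0 & W :&: C2 != set0]) ->
     resolving e (W :\ v)).
Proof.
split=> W W_res; first by move=> C1 C2; apply: resolving_disjoint_components.
case=> C1 [C2 [C1_comp C2_comp C12 W_C1 W_C2]].
exact: resolving_setD1_cut W_res C1_comp C2_comp C12 W_C1 W_C2.
Qed.
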